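(* Let $f: E \to \Delta[n]$ be a surjective map of simplicial sets and let $\alpha$ be a vertex of the barycentric subdivision $\Delta'[n]$, i.e. a non-degenerate face $\alpha: \Delta[k] \hookrightarrow \Delta[n]$. Then the inclusion $Sdf^{-1}(\alpha) \hookrightarrow ESt(\alpha)$ is a homotopy equivalence.
   Context: The barycentric subdivision $\Delta'[n]$ is the simplicial set whose $q$-simplices are chains $\mu=(\mu_0,\dots,\mu_q)$ of non-degenerate faces $\mu_i:\Delta[k_i]\hookrightarrow\Delta[n]$ with $\mathrm{Im}\,\mu_i\subseteq\mathrm{Im}\,\mu_{i+1}$, with simplicial operator $\theta:[q']\to[q]$ acting by $\mu\mapsto(\mu_{\theta(0)},\dots,\mu_{\theta(q')})$; it is functorial in $n$. For a simplicial set $E$, the subdivision is $SdE=\mathrm{colim}_{\Delta E}\Delta'[p]$ over the simplex category of $E$; its $q$-simplices are classes $[x,\mu]$ with $x$ a $p$-simplex of $E$ and $\mu$ a $q$-simplex of $\Delta'[p]$. For $f:E\to\Delta[n]$, the map $Sdf: SdE\to\Delta'[n]$ sends $[x,\mu]$ to $(\nu_0,\dots,\nu_q)$, where $f\circ x\circ\mu_i:\Delta[k_i]\to\Delta[n]$ is factored uniquely as a surjection $\Delta[k_i]\to\Delta[l_i]$ followed by an injection $\nu_i:\Delta[l_i]\hookrightarrow\Delta[n]$. $Sdf^{-1}(\alpha)$ is the preimage under $Sdf$ of the vertex $\alpha$ (the simplices mapping to degeneracies of $\alpha$). The star $St(\alpha)\subseteq\Delta'[n]$ is the subspace of simplices $(\mu_0,\dots,\mu_p)$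 with $\mathrm{Im}\,\mu_i\supseteq\mathrm{Im}\,\alpha$ for all $i$, and $ESt(\alpha)=Sdf^{-1}(St(\alpha))$. *)

From Stdlib Require Import Relations ClassicalEpsilon.
From mathcomp Require Import all_boot.

Set Implicit Arguments.
Unset Strict Implicit.
Unset Printing Implicit Defensive.

Definition monob (p q : nat) (f : {ffun 'I_p.+1 -> 'I_q.+1}) : bool :=
  [forall i : 'I_p.+1, forall j : 'I_p.+1, (i <= j) ==> (f i <= f j)].

Definition Dmor (p q : nat) := {f : {ffun 'I_p.+1 -> 'I_q.+1} | monob f}.

Lemma monobP (p q : nat) (f : {ffun 'I_p.+1 -> 'I_q.+1}) :
  reflect (forall i j : 'I_p.+1, i <= j -> f i <= f j) (monob f).
Proof.
apply: (iffP forallP) => [H i j lij | H i].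
  by move/forallP: (H i) => /(_ j) /implyP; apply.
by apply/forallP => j; apply/implyP; exact: H.
Qed.

Lemma did_mono (q : nat) : monob [ffun i : 'I_q.+1 => i].
Proof. by apply/monobP => i j lij; rewrite !ffunE. Qed.

Definition did (q : nat) : Dmor q q := exist (@monob q q) _ (did_mono q).

Lemma dcomp_mono (p q r : nat) (g : Dmor q r) (f : Dmor p q) :
  monob [ffun i => sval g (sval f i)].
Proof.
apply/monobP => i j lij; rewrite !ffunE.
apply: (elimT (monobP _) (proj2_sig g)).
exact: (elimT (monobP _) (proj2_sig f)).
Qed.

Definition dcomp (p q r : nat) (g : Dmor q r) (f : Dmor p q) : Dmor p r :=
  exist (@monob p r) _ (dcomp_mono g f).

Lemma dcst_mono (q : nat) (b : 'I_2) : monob [ffun _ : 'I_q.+1 => b].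
Proof. by apply/monobP => i j _; rewrite !ffunE. Qed.

Definition dcst (q : nat) (b : 'I_2) : Dmor q 1 := exist (@monob q 1) _ (dcst_mono q b).

Record sSet := SSet {
  ssimp : nat -> Type ;
  sact : forall p q : nat, Dmor p q -> ssimp q -> ssimp p }.
Arguments sact s {p q} _ _.

Definition is_sSet (E : sSet) : Prop :=
  (forall q (x : ssimp E q), sact E (did q) x = x) /\
  (forall p q r (f : Dmor p q) (g : Dmor q r) (x : ssimp E r),
      sact E f (sact E g x) = sact E (dcomp g f) x).

(** A simplicial map E -> Delta[n]; the q-simplices of Delta[n] are [Dmor q n]
    and a simplicial operator acts by precomposition. *)
Definition to_simplex_natural (E : sSet) (n : nat)
  (f : forall q, ssimp E q -> Dmor q n) : Prop :=
  forall p q (th : Dmor p q) (x : ssimp E q),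
    f p (sact E th x) = dcomp (f q x) th.

Definition to_simplex_surjective (E : sSet) (n : nat)
  (f : forall q, ssimp E q -> Dmor q n) : Prop :=
  forall q (y : Dmor q n), exists x : ssimp E q, f q x = y.

(** * Barycentric subdivision Delta'[p]
    A non-degenerate face of Delta[p] is determined by its image, a nonempty
    subset of 'I_p.+1.  A q-simplex of Delta'[p] is a chain
    mu_0 <= ... <= mu_q of such faces (by inclusion of images). *)

Definition chainb (p q : nat) (s : {ffun 'I_q.+1 -> {set 'I_p.+1}}) : bool :=
  [forall i, s i != set0] &&
  [forall i : 'I_q.+1, forall j : 'I_q.+1, (i <= j) ==> (s i \subset s j)].

Definition Sdn (p q : nat) := {s : {ffun 'I_q.+1 -> {set 'I_p.+1}} | chainb s}.

Lemma chainbP (p q : nat) (s : {ffun 'I_q.+1 -> {set 'I_p.+1}}) :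
  reflect ((forall i, s i != set0) /\
           (forall i j : 'I_q.+1, i <= j -> s i \subset s j)) (chainb s).
Proof.
apply: (iffP andP) => [[/forallP H1 /forallP H2] | [H1 H2]]; split.
- exact: H1.
- by move=> i j lij; move/forallP: (H2 i) => /(_ j) /implyP; apply.
- exact/forallP.
- by apply/forallP => i; apply/forallP => j; apply/implyP; exact: H2.
Qed.

Lemma sd_map_chain (p p' q : nat) (th : Dmor p p') (mu : Sdn p q) :
  chainb [ffun i => (fun k => sval th k) @: sval mu i].
Proof.
have /chainbP [H1 H2] := proj2_sig mu.
apply/chainbP; split=> [i | i j lij]; rewrite !ffunE.
  by rewrite imset_eq0.
exact/imsetS/H2.
Qed.

(** functoriality of Delta'[-]: a face mu_i is sent to (the non-degenerate
    part of) th \o mu_i, i.e. to the image th(mu_i). *)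
Definition sd_map (p p' q : nat) (th : Dmor p p') (mu : Sdn p q) : Sdn p' q :=
  exist (@chainb p' q) _ (sd_map_chain th mu).

Lemma sd_re_chain (p q q' : nat) (mu : Sdn p q) (th : Dmor q' q) :
  chainb [ffun j => sval mu (sval th j)].
Proof.
have /chainbP [H1 H2] := proj2_sig mu.
apply/chainbP; split=> [i | i j lij]; rewrite !ffunE.
  exact: H1.
apply: H2; exact: (elimT (monobP _) (proj2_sig th)).
Qed.

Definition sd_re (p q q' : nat) (mu : Sdn p q) (th : Dmor q' q) : Sdn p q' :=
  exist (@chainb p q') _ (sd_re_chain mu th).

(** * Subdivision SdE = colim_{Delta E} Delta'[p]
    q-simplices: pairs (x, mu), x a p-simplex of E, mu a q-simplex of
    Delta'[p], modulo the equivalence relation generated by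
    (th^* y, mu) ~ (y, Delta'[th] mu). *)

Section Subdivision.
Variable E : sSet.

Definition pre (q : nat) := {p : nat & (ssimp E p * Sdn p q)%type}.

Inductive sd_step (q : nat) : pre q -> pre q -> Prop :=
| SdStep : forall p p' (th : Dmor p p') (y : ssimp E p') (mu : Sdn p q),
    sd_step (existT _ p (sact E th y, mu)) (existT _ p' (y, sd_map th mu)).

Definition sd_eqv (q : nat) : relation (pre q) :=
  clos_refl_sym_trans (pre q) (@sd_step q).

Definition sd_cls (q : nat) (a : pre q) : pre q -> Prop := sd_eqv a.

Definition SdE_simp (q : nat) := {C : pre q -> Prop | exists a, C = sd_cls a}.

Definition sd_rep (q : nat) (C : SdE_simp q) : pre q :=
  proj1_sig (constructive_indefinite_description _ (proj2_sig C)).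

Definition pre_act (q q' : nat) (th : Dmor q' q) (a : pre q) : pre q' :=
  existT _ (projT1 a) ((projT2 a).1, sd_re (projT2 a).2 th).

Definition SdE_act (q' q : nat) (th : Dmor q' q) (C : SdE_simp q) : SdE_simp q' :=
  exist _ (sd_cls (pre_act th (sd_rep C))) (ex_intro _ _ erefl).

Definition SdE : sSet := SSet SdE_act.

End Subdivision.

(** Sdf : SdE -> Delta'[n],  [x, mu] |-> (nu_0, ..., nu_q) with
    nu_i the non-degenerate part of f(x) \o mu_i, i.e. its image. *)
Definition Sdf (E : sSet) (n : nat) (f : forall q, ssimp E q -> Dmor q n)
  (q : nat) (C : ssimp (SdE E) q) : Sdn n q :=
  let a := sd_rep C in sd_map (f (projT1 a) (projT2 a).1) (projT2 a).2.

(** Sdf^{-1}(alpha): simplices sent to a degeneracy of the vertex alpha *)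
Definition Sd_fiber (E : sSet) (n : nat) (f : forall q, ssimp E q -> Dmor q n)
  (alpha : {set 'I_n.+1}) (q : nat) (C : ssimp (SdE E) q) : Prop :=
  forall i, sval (Sdf f C) i = alpha.

(** ESt(alpha) = Sdf^{-1}(St(alpha)) *)
Definition ESt (E : sSet) (n : nat) (f : forall q, ssimp E q -> Dmor q n)
  (alpha : {set 'I_n.+1}) (q : nat) (C : ssimp (SdE E) q) : Prop :=
  forall i, alpha \subset sval (Sdf f C) i.

(** Sub-simplicial sets are given by predicates on the simplices of X; maps
    between them are families of functions on X restricted to the predicate. *)

Section Homotopy.
Variable X : sSet.

Definition natural_on (B : forall q, ssimp X q -> Prop)
  (g : forall q, ssimp X q -> ssimp X q) : Prop :=
  forall p q (th : Dmor p q) (x : ssimp X q),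
    B q x -> g p (sact X th x) = sact X th (g q x).

Definition maps_into (B T : forall q, ssimp X q -> Prop)
  (g : forall q, ssimp X q -> ssimp X q) : Prop :=
  forall q (x : ssimp X q), B q x -> T q (g q x).

(** elementary simplicial homotopy B x Delta[1] -> T from g0 to g1;
    the q-simplices of Delta[1] are [Dmor q 1]. *)
Definition elem_htpy (B T : forall q, ssimp X q -> Prop)
  (g0 g1 : forall q, ssimp X q -> ssimp X q) : Prop :=
  exists H : forall q, ssimp X q -> Dmor q 1 -> ssimp X q,
    (forall q x t, B q x -> T q (H q x t)) /\
    (forall p q (th : Dmor p q) x t,
        B q x -> H p (sact X th x) (dcomp t th) = sact X th (H q x t)) /\
    (forall q x, B q x -> H q x (dcst q ord0) = g0 q x) /\
    (forall q x, B q x -> H q x (dcst q ord_max) = g1 q x).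

Definition htpic (B T : forall q, ssimp X q -> Prop) :
  relation (forall q, ssimp X q -> ssimp X q) :=
  clos_refl_sym_trans _ (elem_htpy B T).

Definition incl_htpy_equiv (A B : forall q, ssimp X q -> Prop) : Prop :=
  (forall q x, A q x -> B q x) /\
  exists r : forall q, ssimp X q -> ssimp X q,
    natural_on B r /\ maps_into B A r /\
    htpic A A r (fun q x => x) /\
    htpic B B r (fun q x => x).

End Homotopy.

From mathcomp Require Import all_boot.
From Stdlib Require Import Relations ClassicalEpsilon FunctionalExtensionality PropExtensionality ProofIrrelevance.

Set Implicit Arguments.
Unset Strict Implicit.
Unset Printing Implicit Defensive.

(* Represent a simplex of ESt(alpha) as [x, mu] and let g = f(x).  Each face
   mu_i satisfies alpha ⊆ g(mu_i), so mu_i ∩ g^-1(alpha) is nonempty with image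
   exactly alpha; shrinking every face in this way retracts ESt(alpha) onto the
   fibre.  For t : [q] -> [1] the chain whose j-th face is mu_j if t(j) = 1 and
   mu_j ∩ g^-1(alpha) if t(j) = 0 is again a chain because t is monotone, and
   it defines a homotopy from the retraction to the identity which preserves
   both the fibre and ESt(alpha).  Everything is compatible with the relation
   defining SdE because th(A ∩ th^-1 B) = th(A) ∩ B. *)

Section ImagePreimage.
Variables (aT rT : finType) (g : aT -> rT).

Lemma imsetI_preimset (A : {set aT}) (B : {set rT}) :
  g @: (A :&: g @^-1: B) = g @: A :&: B.
Proof.
apply/setP => y; apply/imsetP/setIP => [[x /setIP [Ax]] | [/imsetP [x Ax ->]]].
  by rewrite inE => gxB ->; split; first exact: imset_f.
by move=> gxB; exists x; rewrite // !inE Ax.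
Qed.

Lemma imsetI_preimset_id (A : {set aT}) (B : {set rT}) :
  B \subset g @: A -> g @: (A :&: g @^-1: B) = B.
Proof. by move=> sBA; rewrite imsetI_preimset; apply/setIidPr. Qed.

Lemma setI_preimset_neq0 (A : {set aT}) (B : {set rT}) :
  B != set0 -> B \subset g @: A -> A :&: g @^-1: B != set0.
Proof.
move=> nzB sBA; apply: contraNneq nzB => AB0.
by rewrite -(imsetI_preimset_id sBA) AB0 imset0.
Qed.

End ImagePreimage.

Lemma Dmor_homo (p q : nat) (th : Dmor p q) : {homo sval th : i j / i <= j}.
Proof. exact/monobP/(proj2_sig th). Qed.

Lemma dcompE (p q r : nat) (g : Dmor q r) (th : Dmor p q) k :
  sval (dcomp g th) k = sval g (sval th k).
Proof. by rewrite ffunE. Qed.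

Lemma dcomp_dcst (p q : nat) (b : 'I_2) (th : Dmor p q) :
  dcomp (dcst q b) th = dcst p b.
Proof. by apply: val_inj; apply/ffunP => k; rewrite !ffunE. Qed.

Lemma Sdn_face_neq0 (p q : nat) (mu : Sdn p q) i : sval mu i != set0.
Proof. by have /chainbP [] := proj2_sig mu. Qed.

Lemma Sdn_face_subset (p q : nat) (mu : Sdn p q) (i j : 'I_q.+1) :
  i <= j -> sval mu i \subset sval mu j.
Proof. by have /chainbP [_] := proj2_sig mu; apply. Qed.

Lemma sd_mapE (p p' q : nat) (th : Dmor p p') (mu : Sdn p q) i :
  sval (sd_map th mu) i = (fun k => sval th k) @: sval mu i.
Proof. by rewrite ffunE. Qed.

Lemma sd_map_dcomp (p p' r q : nat) (g : Dmor p' r) (th : Dmor p p') (mu : Sdn p q) :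
  sd_map (dcomp g th) mu = sd_map g (sd_map th mu).
Proof.
apply: val_inj; apply/ffunP => i; rewrite !sd_mapE -imset_comp.
by apply: eq_imset => k; rewrite /= dcompE.
Qed.

Lemma sd_map_re (p p' q q' : nat) (th : Dmor p p') (mu : Sdn p q) (th' : Dmor q' q) :
  sd_map th (sd_re mu th') = sd_re (sd_map th mu) th'.
Proof. by apply: val_inj; apply/ffunP => j; rewrite /= !ffunE. Qed.

Section SubdivisionClasses.
Variable E : sSet.

Definition sd_class (q : nat) (a : pre E q) : SdE_simp E q :=
  exist _ (sd_cls a) (ex_intro _ a erefl).

Lemma sd_class_eqv (q : nat) (a b : pre E q) : sd_eqv a b -> sd_class a = sd_class b.
Proof.
move=> ab; apply: subset_eq_compat.
apply: functional_extensionality => c; apply: propositional_extensionality.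
split; [exact: rst_trans (rst_sym _ _ _ _ ab) | exact: rst_trans _ _ _ _ _ ab].
Qed.

Lemma sd_class_rep (q : nat) (C : SdE_simp E q) : sd_class (sd_rep C) = C.
Proof.
case: C => P exP; apply: subset_eq_compat; rewrite /sd_rep /=.
by case: constructive_indefinite_description.
Qed.

Lemma sd_rep_class (q : nat) (a : pre E q) : sd_eqv (sd_rep (sd_class a)) a.
Proof.
have /(congr1 sval)/equal_f/(_ a) := sd_class_rep (sd_class a).
by rewrite /= /sd_cls => ->; apply: rst_refl.
Qed.

Lemma sd_eqv_homo (q q' : nat) (F : pre E q -> pre E q') :
  {homo F : a b / sd_step a b >-> sd_eqv a b} -> {homo F : a b / sd_eqv a b}.
Proof.
move=> homF a b; elim=> [x y /homF | x | x y _ | x y z _ Fxy _] //.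
- exact: rst_refl.
- exact: rst_sym.
- exact: rst_trans.
Qed.

Lemma pre_act_eqv (q q' : nat) (th : Dmor q' q) :
  {homo @pre_act E q q' th : a b / sd_eqv a b}.
Proof.
apply: sd_eqv_homo => _ _ [p p' th' y mu].
by rewrite /pre_act /= -sd_map_re; apply/rst_step/SdStep.
Qed.

Lemma sact_sd_class (q q' : nat) (th : Dmor q' q) (a : pre E q) :
  sact (SdE E) th (sd_class a) = sd_class (pre_act th a).
Proof. exact/sd_class_eqv/pre_act_eqv/sd_rep_class. Qed.

End SubdivisionClasses.

Section FibrewiseMaps.
Variables (E : sSet) (n : nat) (f : forall q, ssimp E q -> Dmor q n).
Hypothesis fnat : to_simplex_natural f.

Definition sd_lift (q q' : nat) (phi : forall p, Dmor p n -> Sdn p q -> Sdn p q')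
  (a : pre E q) : pre E q' :=
  existT _ (projT1 a) ((projT2 a).1, phi _ (f (projT2 a).1) (projT2 a).2).

Lemma sd_lift_eqv (q q' : nat) (phi : forall p, Dmor p n -> Sdn p q -> Sdn p q') :
  (forall p p' (th : Dmor p p') (g : Dmor p' n) (mu : Sdn p q),
      sd_map th (phi p (dcomp g th) mu) = phi p' g (sd_map th mu)) ->
  {homo sd_lift phi : a b / sd_eqv a b}.
Proof.
move=> phi_nat; apply: sd_eqv_homo => _ _ [p p' th y mu].
by rewrite /sd_lift /= fnat -phi_nat; apply/rst_step/SdStep.
Qed.

Definition sd_image (q : nat) (a : pre E q) : Sdn n q :=
  sd_map (f (projT2 a).1) (projT2 a).2.

Lemma sd_image_eqv (q : nat) (a b : pre E q) : sd_eqv a b -> sd_image a = sd_image b.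
Proof.
elim=> [_ _ [p p' th y mu] | // | // | x y z _ -> _ //].
by rewrite /sd_image /= fnat sd_map_dcomp.
Qed.

Lemma Sdf_sd_class (q : nat) (a : pre E q) : Sdf f (sd_class a) = sd_image a.
Proof. exact/sd_image_eqv/sd_rep_class. Qed.

End FibrewiseMaps.

Section Shrink.
Variables (n : nat) (alpha : {set 'I_n.+1}).
Hypothesis alpha_neq0 : alpha != set0.

Definition shrink_faces (p q : nat) (g : Dmor p n) (mu : Sdn p q) :
  {ffun 'I_q.+1 -> {set 'I_p.+1}} :=
  [ffun i => sval mu i :&: sval g @^-1: alpha].

Definition shrinkable (p q : nat) (g : Dmor p n) (mu : Sdn p q) : bool :=
  [forall i, shrink_faces g mu i != set0].

Lemma chainb_shrink_faces (p q : nat) (g : Dmor p n) (mu : Sdn p q) :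
  chainb (shrink_faces g mu) = shrinkable g mu.
Proof.
rewrite /chainb [X in _ && X](introT forallP) ?andbT // => i.
apply/forallP => j; apply/implyP => lij; rewrite !ffunE.
exact/setSI/Sdn_face_subset.
Qed.

(* If some face misses g^-1(alpha), which happens only outside ESt(alpha),
   [shrink] returns [mu] unchanged; this keeps it total and natural. *)
Definition shrink (p q : nat) (g : Dmor p n) (mu : Sdn p q) : Sdn p q :=
  insubd mu (shrink_faces g mu).

Lemma shrinkE (p q : nat) (g : Dmor p n) (mu : Sdn p q) :
  sval (shrink g mu) = if shrinkable g mu then shrink_faces g mu else sval mu.
Proof. by rewrite -chainb_shrink_faces; apply: val_insubd. Qed.

Lemma shrink_subset (p q : nat) (g : Dmor p n) (mu : Sdn p q) i :
  sval (shrink g mu) i \subset sval mu i.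
Proof. by rewrite shrinkE; case: ifP; rewrite ?ffunE ?subsetIl. Qed.

Lemma sd_map_shrink_faces (p p' q : nat) (th : Dmor p p') (g : Dmor p' n)
    (mu : Sdn p q) i :
  (fun k => sval th k) @: shrink_faces (dcomp g th) mu i =
  shrink_faces g (sd_map th mu) i.
Proof.
rewrite !ffunE -imsetI_preimset; congr (_ @: (_ :&: _)).
by apply/setP => k; rewrite !inE dcompE.
Qed.

Lemma shrink_natural (p p' q : nat) (th : Dmor p p') (g : Dmor p' n) (mu : Sdn p q) :
  sd_map th (shrink (dcomp g th) mu) = shrink g (sd_map th mu).
Proof.
have same_shrinkable : shrinkable g (sd_map th mu) = shrinkable (dcomp g th) mu.
  by apply: eq_forallb => i; rewrite -sd_map_shrink_faces imset_eq0.
apply: val_inj => /=; apply/ffunP => i.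
rewrite sd_mapE !shrinkE same_shrinkable; case: ifP => _.
  exact: sd_map_shrink_faces.
by rewrite sd_mapE.
Qed.

Definition covers (p q : nat) (g : Dmor p n) (mu : Sdn p q) : Prop :=
  forall i, alpha \subset sval (sd_map g mu) i.

Lemma covers_re (p q q' : nat) (g : Dmor p n) (mu : Sdn p q) (th : Dmor q' q) :
  covers g mu -> covers g (sd_re mu th).
Proof. by move=> cov j; rewrite sd_map_re ffunE; apply: cov. Qed.

Lemma covers_shrinkable (p q : nat) (g : Dmor p n) (mu : Sdn p q) :
  covers g mu -> shrinkable g mu.
Proof.
move=> cov; apply/forallP => i; rewrite ffunE.
by apply: setI_preimset_neq0 alpha_neq0 _; rewrite -sd_mapE.
Qed.

Lemma sd_map_shrink (p q : nat) (g : Dmor p n) (mu : Sdn p q) i :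
  covers g mu -> sval (sd_map g (shrink g mu)) i = alpha.
Proof.
move=> cov; rewrite sd_mapE shrinkE covers_shrinkable // ffunE.
by apply: imsetI_preimset_id; rewrite -sd_mapE.
Qed.

Lemma shrink_re (p q q' : nat) (g : Dmor p n) (mu : Sdn p q) (th : Dmor q' q) :
  covers g mu -> shrink g (sd_re mu th) = sd_re (shrink g mu) th.
Proof.
move=> cov; have cov_re := covers_re th cov.
apply: val_inj => /=; apply/ffunP => j.
by rewrite ffunE !shrinkE !covers_shrinkable // /shrink_faces !ffunE.
Qed.

Definition htpy_faces (p q : nat) (t : Dmor q 1) (g : Dmor p n) (mu : Sdn p q) :
  {ffun 'I_q.+1 -> {set 'I_p.+1}} :=
  [ffun j => if 0 < sval t j then sval mu j else sval (shrink g mu) j].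

Lemma htpy_faces_chain (p q : nat) (t : Dmor q 1) (g : Dmor p n) (mu : Sdn p q) :
  chainb (htpy_faces t g mu).
Proof.
apply/chainbP; split=> [i | i j lij]; rewrite !ffunE.
  by case: ifP => _; apply: Sdn_face_neq0.
have tij := Dmor_homo t lij.
case: ifP => ti; case: ifP => tj.
- exact: Sdn_face_subset.
- by rewrite (leq_trans ti tij) in tj.
- exact: subset_trans (shrink_subset _ _ i) (Sdn_face_subset _ lij).
- exact: Sdn_face_subset.
Qed.

Definition htpy_simplex (p q : nat) (t : Dmor q 1) (g : Dmor p n) (mu : Sdn p q) :
  Sdn p q := exist _ (htpy_faces t g mu) (htpy_faces_chain t g mu).

Lemma htpy_simplex_natural (q : nat) (t : Dmor q 1) (p p' : nat) (th : Dmor p p')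
    (g : Dmor p' n) (mu : Sdn p q) :
  sd_map th (htpy_simplex t (dcomp g th) mu) = htpy_simplex t g (sd_map th mu).
Proof.
apply: val_inj; apply/ffunP => j; rewrite /= !ffunE.
by case: ifP => _; rewrite // -shrink_natural sd_mapE.
Qed.

Lemma htpy_simplex_re (p q q' : nat) (t : Dmor q 1) (th : Dmor q' q)
    (g : Dmor p n) (mu : Sdn p q) :
  covers g mu -> htpy_simplex (dcomp t th) g (sd_re mu th) = sd_re (htpy_simplex t g mu) th.
Proof.
move=> cov; apply: val_inj; apply/ffunP => j.
by rewrite /= !ffunE shrink_re // ffunE.
Qed.

Lemma sd_map_htpy_simplex (p q : nat) (t : Dmor q 1) (g : Dmor p n) (mu : Sdn p q) i :
  covers g mu ->
  sval (sd_map g (htpy_simplex t g mu)) i =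
  if 0 < sval t i then sval (sd_map g mu) i else alpha.
Proof.
move=> cov; rewrite !sd_mapE ffunE; case: ifP => _ //.
by rewrite -sd_mapE sd_map_shrink.
Qed.

End Shrink.

Section StarRetraction.
Variables (E : sSet) (n : nat) (f : forall q, ssimp E q -> Dmor q n).
Hypothesis fnat : to_simplex_natural f.
Variable alpha : {set 'I_n.+1}.
Hypothesis alpha_neq0 : alpha != set0.

Lemma Sd_fiber_ESt (q : nat) (C : ssimp (SdE E) q) :
  Sd_fiber f alpha C -> ESt f alpha C.
Proof. by move=> fibC i; rewrite fibC. Qed.

Definition sd_htpy (q : nat) (C : ssimp (SdE E) q) (t : Dmor q 1) : ssimp (SdE E) q :=
  sd_class (sd_lift f (fun p g mu => htpy_simplex alpha t g mu) (sd_rep C)).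

Definition sd_retract (q : nat) (C : ssimp (SdE E) q) : ssimp (SdE E) q :=
  sd_htpy C (dcst q ord0).

Lemma Sdf_sd_htpy (q : nat) (C : ssimp (SdE E) q) (t : Dmor q 1) i :
  ESt f alpha C ->
  sval (Sdf f (sd_htpy C t)) i = if 0 < sval t i then sval (Sdf f C) i else alpha.
Proof. by move=> stC; rewrite Sdf_sd_class //; apply: sd_map_htpy_simplex. Qed.

Lemma sd_htpy_natural (p q : nat) (th : Dmor p q) (C : ssimp (SdE E) q) (t : Dmor q 1) :
  ESt f alpha C -> sd_htpy (sact (SdE E) th C) (dcomp t th) = sact (SdE E) th (sd_htpy C t).
Proof.
move=> stC; rewrite sact_sd_class.
rewrite /sd_htpy (sd_class_eqv (sd_lift_eqv fnat _ (sd_rep_class _))); last first.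
  by move=> *; apply: htpy_simplex_natural.
congr sd_class; move: stC; rewrite /ESt /Sdf /sd_lift /pre_act.
by case: (sd_rep C) => p' [x mu] /= cov; rewrite htpy_simplex_re.
Qed.

Lemma sd_htpy1 (q : nat) (C : ssimp (SdE E) q) : sd_htpy C (dcst q ord_max) = C.
Proof.
rewrite /sd_htpy -[in RHS](sd_class_rep C); congr sd_class.
case: (sd_rep C) => p [x mu]; rewrite /sd_lift /=; congr existT; congr pair.
by apply: val_inj; apply/ffunP => j; rewrite /= !ffunE.
Qed.

Lemma sd_htpy_ESt (q : nat) (C : ssimp (SdE E) q) (t : Dmor q 1) :
  ESt f alpha C -> ESt f alpha (sd_htpy C t).
Proof. by move=> stC i; rewrite Sdf_sd_htpy //; case: ifP. Qed.

Lemma sd_htpy_fiber (q : nat) (C : ssimp (SdE E) q) (t : Dmor q 1) :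
  Sd_fiber f alpha C -> Sd_fiber f alpha (sd_htpy C t).
Proof.
move=> fibC i; rewrite Sdf_sd_htpy ?fibC; first by case: ifP.
exact: Sd_fiber_ESt.
Qed.

Lemma sd_retract_natural : natural_on (ESt f alpha) sd_retract.
Proof. by move=> p q th C stC; rewrite /sd_retract -sd_htpy_natural ?dcomp_dcst. Qed.

Lemma sd_retract_fiber : maps_into (ESt f alpha) (Sd_fiber f alpha) sd_retract.
Proof. by move=> q C stC i; rewrite Sdf_sd_htpy /= ?ffunE. Qed.

Lemma elem_htpy_sd_retract (B : forall q, ssimp (SdE E) q -> Prop) :
  (forall q (C : ssimp (SdE E) q), B q C -> ESt f alpha C) ->
  (forall q (C : ssimp (SdE E) q) t, B q C -> B q (sd_htpy C t)) ->
  elem_htpy B B sd_retract (fun q C => C).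
Proof.
move=> BESt Bhtpy; exists sd_htpy; split; first exact: Bhtpy.
split; first by move=> p q th C t /BESt; apply: sd_htpy_natural.
by split=> // q C _; apply: sd_htpy1.
Qed.

End StarRetraction.

Theorem lemma4p2 (E : sSet) (HE : is_sSet E) (n : nat)
  (f : forall q, ssimp E q -> Dmor q n)
  (fnat : to_simplex_natural f) (fsurj : to_simplex_surjective f)
  (alpha : {set 'I_n.+1}) (Halpha : alpha != set0) :
  incl_htpy_equiv (Sd_fiber f alpha) (ESt f alpha).
Proof.
split; first exact: Sd_fiber_ESt.
exists (sd_retract f alpha).
split; first exact: sd_retract_natural.
split; first exact: sd_retract_fiber.
split; apply/rst_step/(elem_htpy_sd_retract fnat Halpha).
- exact: Sd_fiber_ESt.
- exact: sd_htpy_fiber.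
- by [].
- exact: sd_htpy_ESt.
Qed.
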